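(* Let $(M,g,\mu)$ be a weighted Riemannian manifold and $R\in(0,\infty]$. Assume $\mu$ satisfies $(D_R)$ and $(RD_R)$ with reverse doubling order $\nu>1$. Then for every $p\in(1,\nu/2)$ there is a constant $K_p<\infty$, depending only on $p$ and the doubling and reverse doubling constants, such that for all $o,x\in M$ and all $0<r<R$, $$r^2\left(\frac{1}{\mu(B(x,r))}\int_{B(x,r)}d(o,y)^{-2p}\,d\mu(y)\right)^{1/p}\le K_p.$$
   Context: $(D_R)$: there are $A,\eta>0$ with $\mu(B(x,r'))/\mu(B(x,r))\le A(r'/r)^\eta$ for all $x$ and $0<r\le r'\le 2R$ (for $R=\infty$: all $0<r\le r'$). $(RD_R)$ of order $\nu$: there is $a>0$ with $a(r'/r)^\nu\le\mu(B(x,r'))/\mu(B(x,r))$ for all $x$ and $0<r\le r'\le 2R$. Weighted manifold: $d\mu=\sigma^2dv_g$, $d$ the Riemannian distance. *)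

From HB Require Import structures.
From mathcomp Require Import all_boot all_order all_algebra.
From mathcomp Require Import all_classical all_reals all_analysis.
Set Implicit Arguments. Unset Strict Implicit. Unset Printing Implicit Defensive.
Import Order.TTheory GRing.Theory Num.Theory.
Local Open Scope ring_scope.
Local Open Scope classical_set_scope.

Definition is_metric {R : realType} {T : Type} (dist : T -> T -> R) : Prop :=
  [/\ forall x y, 0 <= dist x y,
      forall x y, dist x y = 0 <-> x = y,
      forall x y, dist x y = dist y x &
      forall x y z, dist x z <= dist x y + dist y z].

Definition mball {R : realType} {T : Type} (dist : T -> T -> R) (x : T) (r : R)
  : set T := [set y | dist x y < r].

Definition doubling_R {R : realType} {d} {T : measurableType d}
  (dist : T -> T -> R) (mu : {measure set T -> \bar R}) (Rad : \bar R)
  (A eta : R) : Prop :=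
  forall x r r', 0 < r -> r <= r' -> (r'%:E <= 2%:E * Rad)%E ->
    (mu (mball dist x r') <= (A * powR (r' / r) eta)%:E * mu (mball dist x r))%E.

Definition rev_doubling_R {R : realType} {d} {T : measurableType d}
  (dist : T -> T -> R) (mu : {measure set T -> \bar R}) (Rad : \bar R)
  (a nu : R) : Prop :=
  forall x r r', 0 < r -> r <= r' -> (r'%:E <= 2%:E * Rad)%E ->
    ((a * powR (r' / r) nu)%:E * mu (mball dist x r) <= mu (mball dist x r'))%E.

Definition inv_dist_pow {R : realType} {T : Type} (dist : T -> T -> R)
  (o : T) (p : R) (y : T) : \bar R :=
  if dist o y == 0 then +oo%E else (powR (dist o y) (- (2 * p)))%:E.

From HB Require Import structures.
From mathcomp Require Import all_boot all_order all_algebra.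
From mathcomp Require Import all_classical all_reals all_analysis.
From mathcomp Require Import measurable_realfun.
From mathcomp Require Import ring lra.
Import Order.TTheory GRing.Theory Num.Theory.
Local Open Scope ring_scope.
Local Open Scope classical_set_scope.

(* Fix o, x and 0 < r < R, and write m = mu(B(x,r)).  The singular integrand is
   split dyadically around o: for every y,
     d(o,y)^(-2p) <= (r/2)^(-2p) + sum_k (r/2^(k+2))^(-2p) 1[d(o,y) < r/2^(k+1)],
   since a point at distance < r/2 from o lies in some dyadic shell.  If the
   k-th ball B(o,r/2^(k+1)) meets B(x,r), then B(o,r/2) is inside B(x,2r), so
   reverse doubling at o and doubling at x give
     mu(B(o,r/2^(k+1)) /\ B(x,r)) <= (A 2^eta / a) 2^(-k nu) m.
   The k-th term of the integral is therefore O(r^(-2p) m q^k) with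
   q = 2^(2p - nu) < 1 (this is where 2p < nu enters), and summing the
   geometric series gives  int_{B(x,r)} d(o,.)^(-2p) <= C r^(-2p) m  with C
   depending only on A, eta, a, nu, p.  Dividing by m, taking the 1/p-th power
   and multiplying by r^2 yields the theorem with K_p = C^(1/p). *)

Lemma powR_exprn {R : realType} (b e : R) n : 0 <= b ->
  (b ^+ n) `^ e = (b `^ e) ^+ n.
Proof. by move=> b0; rewrite -powR_mulrn// powRAC powR_mulrn// powR_ge0. Qed.

Lemma powRN_div_expr {R : realType} (r b e : R) n : 0 < r -> 0 < b ->
  (r / b ^+ n) `^ (- e) = r `^ (- e) * (b `^ e) ^+ n.
Proof.
move=> r0 b0; have bn0 : 0 < b ^+ n by rewrite exprn_gt0.
rewrite /powR !gt_eqF ?divr_gt0// -expRM_natl -expRD.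
by rewrite ln_div ?posrE// lnXn//; congr expR; ring.
Qed.

Lemma powRN_le {R : realType} (s t e : R) : 0 < s -> s <= t -> 0 <= e ->
  t `^ (- e) <= s `^ (- e).
Proof.
move=> s0 st e0; have t0 : 0 < t by exact: lt_le_trans st.
rewrite !powRN lef_pV2 ?posrE ?powR_gt0//.
by apply: ge0_ler_powR => //; rewrite nnegrE ltW.
Qed.

Lemma dyadic_shell {R : realType} {r t : R} : 0 < t -> t < r / 2 ->
  exists k, r / 2 ^+ k.+2 <= t < r / 2 ^+ k.+1.
Proof.
move=> t0 tr; have r0 : 0 < r by have := lt_trans t0 tr; rewrite pmulr_lgt0.
have ex_n : exists n, r / 2 ^+ n.+1 <= t.
  exists (Num.trunc (r / t)); rewrite ler_pdivrMr ?exprn_gt0// -ler_pdivrMl//.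
  apply/ltW/(lt_le_trans (truncnS_gt _)); rewrite mulrC.
  by rewrite -natrX ler_nat ltnW// ltn_expl.
case: (ex_minnP ex_n) => -[|k] rkt kmin.
  by move: rkt; rewrite expr1 leNgt tr.
exists k; rewrite rkt /= ltNge; apply/negP => /kmin.
by rewrite ltnn.
Qed.

Lemma nneseries_eq_pinfty {R : realType} (u : nat -> \bar R) (c : R) :
  0 < c -> (forall k, (c%:E <= u k)%E) -> (\sum_(k <oo) u k = +oo)%E.
Proof.
move=> c0 cu; have u0 k : (0 <= u k)%E by exact: le_trans (ltW _) (cu k).
apply/eqyP => M _; pose n := (Num.trunc (M / c)).+1.
apply: le_trans _ (@nneseries_lim_ge _ u xpredT 0 n (fun k _ _ => u0 k)).
apply: (@le_trans _ _ (\sum_(0 <= k < n) c%:E)%E); last exact: lee_sum.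
rewrite sumEFin lee_fin sumr_const_nat subn0 -mulr_natl.
by apply/ltW; rewrite -ltr_pdivrMr//; exact: truncnS_gt.
Qed.

Lemma nneseries_geometric_le {R : realType} (u : nat -> \bar R) (w q : R) :
  0 <= w -> 0 < q < 1 -> (forall k, (0 <= u k <= (w * q ^+ k)%:E)%E) ->
  (\sum_(k <oo) u k <= (w / (1 - q))%:E)%E.
Proof.
move=> w0 /andP[q0 q1] uq.
apply: lime_le; first by apply: is_cvg_nneseries => k _ _; case/andP: (uq k).
apply: nearW => n; apply: (@le_trans _ _ (\sum_(0 <= k < n) (w * q ^+ k)%:E)%E).
  by apply: lee_sum => k _; case/andP: (uq k).
rewrite sumEFin lee_fin.
by apply: geometric_le_lim => //; rewrite ger0_norm ?ltW.
Qed.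

(* Dyadic decomposition of the singularity t^(-e) at scale r: the shell
   containing t contributes a term dominating t^(-e), and t = 0 makes every
   term at least (r/4)^(-e), so the series diverges. *)
Lemma dyadic_singularity_bound {R : realType} (r e t : R) :
  0 < r -> 0 < e -> 0 <= t ->
  ((if t == 0%R then +oo else (t `^ (- e))%:E) <=
   ((r / 2) `^ (- e))%:E +
   \sum_(k <oo) ((r / 2 ^+ k.+2) `^ (- e) * ((t < r / 2 ^+ k.+1)%R : bool)%:R)%:E)%E.
Proof.
move=> r0 e0 t0.
pose u k := ((r / 2 ^+ k.+2) `^ (- e) * ((t < r / 2 ^+ k.+1)%R : bool)%:R)%:E.
change ((if t == 0%R then +oo else (t `^ (- e))%:E) <=
        ((r / 2) `^ (- e))%:E + \sum_(k <oo) u k)%E.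
have u0 k : (0 <= u k)%E by rewrite lee_fin mulr_ge0 ?powR_ge0.
have S0 : (0 <= \sum_(k <oo) u k)%E by exact: nneseries_ge0.
have scale_gt0 k : 0 < r / 2 ^+ k by rewrite divr_gt0 ?exprn_gt0.
case: eqP => [t_eq0|/eqP tn0].
  suff -> : (\sum_(k <oo) u k = +oo)%E by rewrite addey.
  apply: (@nneseries_eq_pinfty _ _ ((r / 2 ^+ 2) `^ (- e))) => [|k].
    exact: powR_gt0.
  rewrite /u t_eq0 scale_gt0 mulr1 lee_fin.
  apply: powRN_le; [exact: scale_gt0| |exact: ltW].
  by rewrite ler_pM2l// lef_pV2 ?posrE ?exprn_gt0// ler_eXn2l ?ltr1n.
have tp : 0 < t by rewrite lt_neqAle eq_sym tn0.
have [rt|tr] := leP (r / 2) t.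
  rewrite -[X in (X <= _)%E]adde0 leeD// lee_fin.
  by apply: powRN_le; [exact: divr_gt0 | exact: rt | exact: ltW].
have [k /andP[rkt tk]] := dyadic_shell tp tr.
rewrite -[X in (X <= _)%E]add0e leeD ?lee_fin ?powR_ge0//.
apply: le_trans (@nneseries_lim_ge _ u xpredT 0 k.+1 (fun n _ _ => u0 n)).
rewrite big_nat_recr//= -[X in (X <= _)%E]add0e leeD ?sume_ge0//.
rewrite /u tk mulr1 lee_fin.
by apply: powRN_le; [exact: scale_gt0 | exact: rkt | exact: ltW].
Qed.

(* Monotonicity of the integral of nonnegative functions; no measurability is
   needed, since the integral is a supremum over simple minorants. *)
Lemma ge0_le_integral_pointwise {d} {T : measurableType d} {R : realType}
    (mu : {measure set T -> \bar R}) {D : set T} {f g : T -> \bar R} :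
  (forall y, D y -> (0 <= f y)%E) -> (forall y, D y -> (f y <= g y)%E) ->
  (\int[mu]_(y in D) f y <= \int[mu]_(y in D) g y)%E.
Proof.
move=> f0 fg.
have g0 y : D y -> (0 <= g y)%E by move=> Dy; exact: le_trans (f0 y Dy) (fg y Dy).
rewrite !ge0_integralE//; apply: ereal_sup_le => _ [h hf <-]; exists h => //= y.
apply: le_trans (hf y) _; rewrite /patch; case: ifP => //; rewrite inE.
exact: fg.
Qed.

Lemma le_double_radius {R : realType} {Rad : \bar R} {r z : R} :
  (r%:E < Rad)%E -> z <= 2 * r -> (z%:E <= 2%:E * Rad)%E.
Proof.
case: Rad => [Rad||]//= rR zr; last by rewrite mulry gtr0_sg// mul1e leey.
rewrite -EFinM lee_fin; rewrite lte_fin in rR; lra.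
Qed.

Lemma inv_dist_pow_ge0 {R : realType} {T : Type} (dist : T -> T -> R) (o : T)
    (p : R) (y : T) :
  (0 <= inv_dist_pow dist o p y)%E.
Proof. by rewrite /inv_dist_pow; case: ifP; rewrite ?le0y ?lee_fin ?powR_ge0. Qed.

(* Ratio of consecutive dyadic contributions, 2^(2p - nu); it is < 1 iff 2p < nu. *)
Definition dyadic_ratio {R : realType} (nu p : R) : R := 2 `^ (2 * p) / 2 `^ nu.

(* The constant C with  int_{B(x,r)} d(o,.)^(-2p) <= C r^(-2p) mu(B(x,r)). *)
Definition singular_integral_const {R : realType} (A eta a nu p : R) : R :=
  2 `^ (2 * p) + (2 `^ (2 * p)) ^+ 2 * (A * 2 `^ eta / a) / (1 - dyadic_ratio nu p).

Lemma dyadic_ratio_gt0 {R : realType} (nu p : R) : 0 < dyadic_ratio nu p.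
Proof. by rewrite divr_gt0 ?powR_gt0. Qed.

Lemma dyadic_ratio_lt1 {R : realType} {nu p : R} : 2 * p < nu -> dyadic_ratio nu p < 1.
Proof.
move=> pnu; rewrite ltr_pdivrMr ?powR_gt0// mul1r /powR !gt_eqF// ltr_expR.
by rewrite ltr_pM2r// ln_gt0// ltr1n.
Qed.

Lemma singular_integral_const_ge0 {R : realType} (A eta a nu p : R) :
  0 <= A -> 0 < a -> 2 * p < nu -> 0 <= singular_integral_const A eta a nu p.
Proof.
move=> A0 a0 /dyadic_ratio_lt1 q1.
have K0 : 0 <= A * 2 `^ eta / a.
  by apply: divr_ge0; [rewrite mulr_ge0 ?powR_ge0 | exact: ltW].
apply: addr_ge0; first exact: powR_ge0.
by apply: divr_ge0; [rewrite mulr_ge0 ?exprn_ge0 ?powR_ge0 | rewrite subr_ge0 ltW].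
Qed.

Section dyadic_estimates.
Context {R : realType} {d : measure_display} {T : measurableType d}.
Context {dist : T -> T -> R} {mu : {measure set T -> \bar R}} {Rad : \bar R}.
Context {A eta a nu : R}.
Hypothesis dist_metric : is_metric dist.
Hypothesis ball_measurable : forall x r, measurable (mball dist x r).
Hypothesis doubling : doubling_R dist mu Rad A eta.
Hypothesis rev_doubling : rev_doubling_R dist mu Rad a nu.
Hypothesis A_ge0 : 0 <= A.
Hypothesis a_gt0 : 0 < a.
Hypothesis ball_finite : forall x r, 0 < r -> (mu (mball dist x r) < +oo)%E.

(* A small ball B(o,s) meeting B(x,r) sits, at scale r/2, inside B(x,2r): reverse
   doubling at o then doubling at x bound its mass by that of B(x,r), with a gain
   ((r/2)/s)^nu. *)
Lemma ball_meet_measure (o x : T) {r s : R} :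
  0 < r -> (r%:E < Rad)%E -> 0 < s -> s <= r / 2 ->
  (mu (mball dist o s `&` mball dist x r) <=
   (A * 2 `^ eta / a / ((r / 2) / s) `^ nu)%:E * mu (mball dist x r))%E.
Proof.
move=> r0 rR s0 sr; case: dist_metric => d0 _ dsym dtri.
have gain_gt0 : 0 < a * ((r / 2) / s) `^ nu by rewrite mulr_gt0// powR_gt0// !divr_gt0.
have [[z [oz xz]]|disjoint] :=
  pselect (exists z, mball dist o s z /\ mball dist x r z); last first.
  rewrite (_ : _ `&` _ = set0) ?measure0; last first.
    by apply/seteqP; split => // y [oy xy]; apply: disjoint; exists y.
  by rewrite mule_ge0// lee_fin !divr_ge0 ?powR_ge0 ?(ltW a_gt0)// mulr_ge0 ?powR_ge0.
have sub : mball dist o (r / 2) `<=` mball dist x (2 * r).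
  move=> y; rewrite /mball /= in oz xz * => oy.
  by have := dtri x z o; have := dtri x o y; rewrite (dsym z o); lra.
rewrite (_ : _ / _ = (a * ((r / 2) / s) `^ nu)^-1 * (A * 2 `^ eta)); last first.
  by field; rewrite (gt_eqF a_gt0) gt_eqF// powR_gt0// !divr_gt0.
rewrite EFinM -muleA lee_pdivlMl//.
have meet_le : (mu (mball dist o s `&` mball dist x r) <= mu (mball dist o s))%E.
  exact: measureIl.
apply: le_trans (lee_wpmul2l _ meet_le) _; first by rewrite lee_fin ltW.
have [half_le r_le] : r / 2 <= 2 * r /\ r <= 2 * r by split; lra.
apply: le_trans (rev_doubling o s (r / 2) s0 sr (le_double_radius rR half_le)) _.
apply: le_trans (le_measure _ _ _ sub) _; rewrite ?inE//.
have := doubling x r (2 * r) r0 r_le (le_double_radius rR (lexx _)).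
by rewrite mulfK ?gt_eqF.
Qed.

Lemma indic_mball (x y : T) (s : R) :
  \1_(mball dist x s) y = ((dist x y < s)%R : bool)%:R :> R.
Proof.
rewrite indicE; suff -> : (y \in mball dist x s) = (dist x y < s) by [].
by apply/idP/idP => [/set_mem|xy]//; exact: mem_set.
Qed.

Lemma shell_integral_le o x r p k : 0 < r -> (r%:E < Rad)%E ->
  (\int[mu]_(y in mball dist x r)
      ((r / 2 ^+ k.+2) `^ (- (2 * p)) * \1_(mball dist o (r / 2 ^+ k.+1)) y)%:E <=
   (r `^ (- (2 * p)) * (2 `^ (2 * p)) ^+ 2 * (A * 2 `^ eta / a) *
      dyadic_ratio nu p ^+ k)%:E * mu (mball dist x r))%E.
Proof.
move=> r0 rR; have s0 : 0 < r / 2 ^+ k.+1 by rewrite divr_gt0 ?exprn_gt0.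
have sr : r / 2 ^+ k.+1 <= r / 2.
  rewrite ler_pM2l// lef_pV2 ?posrE ?exprn_gt0//.
  by rewrite exprS ler_peMr// exprn_ege1// ler1n.
under eq_integral do rewrite EFinM.
rewrite ge0_integralZl_EFin ?powR_ge0//; last first.
  by apply/measurable_EFinP; exact: measurable_indic.
rewrite integral_indic//.
apply: le_trans (lee_wpmul2l _ (ball_meet_measure o x r0 rR s0 sr)) _.
  by rewrite lee_fin powR_ge0.
rewrite muleA -EFinM lee_wpmul2r// lee_fin.
have -> : r / 2 / (r / 2 ^+ k.+1) = 2 ^+ k.
  by rewrite exprS; field; rewrite expf_neq0// gt_eqF.
rewrite powR_exprn// powRN_div_expr// /dyadic_ratio exprMn exprVn !exprS.
have Qk : 2 `^ nu ^+ k != 0 :> R by rewrite expf_neq0// gt_eqF ?powR_gt0.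
by rewrite le_eqVlt; apply/orP; left; apply/eqP; field; rewrite Qk gt_eqF.
Qed.

(* The averaged singular integral over B(x,r) is O(r^(-2p)): dominate the
   integrand by its dyadic decomposition and sum the shell contributions. *)
Lemma integral_inv_dist_pow_le o x r p : 0 < r -> (r%:E < Rad)%E ->
  0 < p -> 2 * p < nu ->
  (\int[mu]_(y in mball dist x r) inv_dist_pow dist o p y <=
   (singular_integral_const A eta a nu p * r `^ (- (2 * p)))%:E *
     mu (mball dist x r))%E.
Proof.
move=> r0 rR p0 pnu; case: dist_metric => dist_ge0 _ _ _.
set B := mball dist x r; have mB : measurable B by exact: ball_measurable.
set e := 2 * p; have e0 : 0 < e by rewrite mulr_gt0.
pose h k y := ((r / 2 ^+ k.+2) `^ (- e) * \1_(mball dist o (r / 2 ^+ k.+1)) y)%:E.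
have h0 k y : (0 <= h k y)%E by rewrite lee_fin mulr_ge0 ?powR_ge0.
have mh k : measurable_fun B (h k).
  apply/measurable_EFinP/measurable_funM; first exact: measurable_cst.
  exact: measurable_indic.
have dyadic y : B y ->
    (inv_dist_pow dist o p y <= ((r / 2) `^ (- e))%:E + \sum_(k <oo) h k y)%E.
  move=> _; under eq_eseriesr do rewrite /h indic_mball.
  exact: dyadic_singularity_bound.
have integrand_ge0 y : B y -> (0 <= inv_dist_pow dist o p y)%E.
  by move=> _; exact: inv_dist_pow_ge0.
apply: le_trans (ge0_le_integral_pointwise mu integrand_ge0 dyadic) _.
rewrite ge0_integralD//; first last.
- exact: ge0_emeasurable_sum (fun k y _ _ => h0 k y) (fun k _ => mh k).
- by move=> y _; exact: nneseries_ge0.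
- by move=> y _; rewrite lee_fin powR_ge0.
rewrite integral_cst// integral_nneseries//.
have muB : mu B = (fine (mu B))%:E by rewrite fineK// ge0_fin_numE ?ball_finite.
set m := fine (mu B) in muB *; have m0 : 0 <= m by rewrite -lee_fin -muB.
set q := dyadic_ratio nu p; set K := A * 2 `^ eta / a.
have q01 : 0 < q < 1 by rewrite dyadic_ratio_gt0 (dyadic_ratio_lt1 pnu).
have K0 : 0 <= K by apply: divr_ge0; [rewrite mulr_ge0 ?powR_ge0 | exact: ltW].
have series_le := @nneseries_geometric_le _ (fun k => (\int[mu]_(y in B) h k y)%E)
  (r `^ (- e) * (2 `^ e) ^+ 2 * K * m) q _ q01.
rewrite muB; apply: le_trans (leeD (lexx _) (series_le _ _)) _.
- exact: mulr_ge0 (mulr_ge0 (mulr_ge0 (powR_ge0 _ _) (exprn_ge0 _ (powR_ge0 _ _))) K0) m0.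
- move=> k; rewrite integral_ge0//=.
  apply: le_trans (shell_integral_le o x r p k r0 rR) _.
  by rewrite muB -EFinM lee_fin mulrAC.
have half : (r / 2) `^ (- e) = r `^ (- e) * 2 `^ e.
  by have := powRN_div_expr r 2 e 1 r0 (ltr0Sn _ 1); rewrite !expr1.
have q_neq1 : 1 - q != 0 by rewrite subr_eq0 gt_eqF//; case/andP: q01.
rewrite -!EFinM -EFinD lee_fin half /singular_integral_const -/q -/K.
by rewrite le_eqVlt; apply/orP; left; apply/eqP; field.
Qed.

End dyadic_estimates.

Lemma normalized_root_bound {R : realType} (M I : \bar R) (C r p : R) :
  0 < r -> 0 < p -> 0 <= C -> (0 < M)%E -> (M < +oo)%E -> (0 <= I)%E ->
  (I <= (C * r `^ (- (2 * p)))%:E * M)%E ->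
  ((r ^+ 2)%:E * poweR ((fine M)^-1%:E * I) p^-1 <= (C `^ p^-1)%:E)%E.
Proof.
move=> r0 p0 C0 M0 Moo I0 IC.
have M_eq : M = (fine M)%:E by rewrite fineK// ge0_fin_numE ?ltW.
set m := fine M in M_eq *; have m0 : 0 < m by rewrite -lte_fin -M_eq.
have avg_le : ((m^-1)%:E * I <= (C * r `^ (- (2 * p)))%:E)%E.
  rewrite lee_pdivrMl// muleC -M_eq; exact: IC.
have pinv0 : 0 <= p^-1 by rewrite invr_ge0 ltW.
have root_le := gt0_ler_poweR pinv0 _ _ avg_le.
rewrite poweR_EFin in root_le.
apply: le_trans (lee_wpmul2l _ (root_le _ _)) _.
- by rewrite lee_fin exprn_ge0 ?ltW.
- by rewrite in_itv /= leey andbT mule_ge0// lee_fin invr_ge0 ltW.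
- by rewrite in_itv /= leey andbT lee_fin mulr_ge0 ?powR_ge0.
rewrite -EFinM lee_fin powRM ?powR_ge0// -powRrM.
have -> : - (2 * p) * p^-1 = - 2 by field; rewrite gt_eqF.
by rewrite powRN powR_mulrn ?(ltW r0)// mulrCA mulfV ?mulr1// expf_neq0// gt_eqF.
Qed.

Theorem mainTheorem7 (R : realType) (A eta a nu p : R) :
  0 < A -> 0 < eta -> 0 < a -> 1 < nu -> 1 < p -> p < nu / 2 ->
  exists Kp : R,
  forall (d : measure_display) (T : measurableType d) (dist : T -> T -> R)
         (mu : {measure set T -> \bar R}) (Rad : \bar R),
    is_metric dist ->
    (forall x r, measurable (mball dist x r)) ->
    (forall x r, 0 < r ->
        (0 < mu (mball dist x r))%E /\ (mu (mball dist x r) < +oo)%E) ->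
    (0 < Rad)%E ->
    doubling_R dist mu Rad A eta ->
    rev_doubling_R dist mu Rad a nu ->
    forall (o x : T) (r : R), 0 < r -> (r%:E < Rad)%E ->
      ((r ^+ 2)%:E *
         poweR ((fine (mu (mball dist x r)))^-1%:E *
                  \int[mu]_(y in mball dist x r) inv_dist_pow dist o p y)
               p^-1
       <= Kp%:E)%E.
Proof.
move=> A0 _ a0 _ p1 pnu.
have p0 : 0 < p by lra.
have two_p_lt_nu : 2 * p < nu by lra.
pose C := singular_integral_const A eta a nu p.
have C0 : 0 <= C by apply: singular_integral_const_ge0 => //; exact: ltW.
exists (C `^ p^-1) => d T dist mu Rad metric ball_meas ball_pos _ Dbl RDbl o x r r0 rR.
have [M0 Moo] := ball_pos x r r0.
have ball_finite y s : 0 < s -> (mu (mball dist y s) < +oo)%E.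
  by move=> s0; case: (ball_pos y s s0).
apply: normalized_root_bound => //.
  by apply: integral_ge0 => y _; exact: inv_dist_pow_ge0.
exact: (integral_inv_dist_pow_le metric ball_meas Dbl RDbl (ltW A0) a0 ball_finite).
Qed.
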